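(* Let $p$ be a prime and $n,K$ positive integers. (1) If $p^K\equiv1\pmod n$, then $P(p,n)$ divides $p^K-1$. (2) If $p^K\equiv-1\pmod n$, then $P(p,n)$ divides $n(p^K-1)$.
   Context: For positive integers $m,n$, let $\mathbf{Z}_m$ be the integers modulo $m$ and $T:\mathbf{Z}_m^n\to\mathbf{Z}_m^n$, $T(a_0,\dots,a_{n-1})=(a_0+a_1,a_1+a_2,\dots,a_{n-1}+a_0)$. For $\mathbf{a}\in\mathbf{Z}_m^n$ the cycle length of $(T^k\mathbf{a})_{k\ge0}$ is the smallest positive integer $P$ such that there is $N$ with $T^{k+P}\mathbf{a}=T^k\mathbf{a}$ for all $k\ge N$. $P(m,n)$ denotes the maximum of these cycle lengths over all $\mathbf{a}\in\mathbf{Z}_m^n$. *)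

From mathcomp Require Import all_boot all_order all_algebra.
From Stdlib Require Import ClassicalEpsilon.
Set Implicit Arguments. Unset Strict Implicit. Unset Printing Implicit Defensive.
Import GRing.Theory.
Local Open Scope ring_scope.

(* Vectors of Z_m^n, indexed by 'I_n.  ('Z_m is Z/mZ for m >= 2; the main
   theorem only uses prime moduli.) *)
Definition vec (m n : nat) := {ffun 'I_n -> 'Z_m}.

Definition Tmap (m n : nat) (a : vec m n) : vec m n :=
  [ffun i : 'I_n => a i + a (ordS i)].

Definition is_eventual_period (m n : nat) (a : vec m n) (P : nat) : Prop :=
  exists N : nat, forall k : nat, (N <= k)%N ->
    iter (k + P) (@Tmap m n) a = iter k (@Tmap m n) a.

Definition is_cycle_length (m n : nat) (a : vec m n) (P : nat) : Prop :=
  (0 < P)%N /\ is_eventual_period a P /\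
  (forall Q : nat, (0 < Q)%N -> is_eventual_period a Q -> (P <= Q)%N).

Definition cycle_length (m n : nat) (a : vec m n) : nat :=
  epsilon (inhabits 0%N) (is_cycle_length a).

Definition Pmax (m n : nat) : nat := \max_(a : vec m n) cycle_length a.

From mathcomp Require Import all_boot all_order all_algebra.
From mathcomp Require Import fingroup perm zify.
From Stdlib Require Import Classical ClassicalEpsilon.
Set Implicit Arguments. Unset Strict Implicit. Unset Printing Implicit Defensive.
Import GRing.Theory.

(* On column vectors over Z_m, T acts as the matrix A = 1 + S, where S is the
   permutation matrix of the cyclic shift, so S^n = 1.  In characteristic p
   the Frobenius identity gives A^(p^K) = 1 + S^(p^K).  If p^K = 1 mod n this
   is A, so T^(k + p^K - 1) = T^k for k >= 1.  If p^K = -1 mod n it is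
   B A with B = S^(p^K) = S^-1 commuting with A, hence
   A^(k + j(p^K - 1)) = B^j A^k, and j = n gives the period n(p^K - 1).  The
   cycle length divides every eventual period, and P(p,n) is a cycle length. *)

Lemma iter_add_mul_period (T : Type) (f : T -> T) (x : T) N P :
  (forall k, N <= k -> iter (k + P) f x = iter k f x) ->
  forall j k, N <= k -> iter (k + j * P) f x = iter k f x.
Proof.
move=> perP; elim=> [|j IH] k le_Nk; first by rewrite addn0.
by rewrite mulSn addnCA addnC perP ?IH // (leq_trans le_Nk) ?leq_addr.
Qed.

Section CycleLength.
Variables (m n : nat) (a : vec m n).

Lemma eventual_period_mod P M :
  is_eventual_period a P -> is_eventual_period a M ->
  is_eventual_period a (M %% P).
Proof.
move=> [NP perP] [NM perM]; exists (maxn NP NM) => k; rewrite geq_max.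
case/andP=> le_NPk le_NMk.
rewrite -(iter_add_mul_period perP (M %/ P)) ?(leq_trans le_NPk) ?leq_addr //.
by rewrite -addnA (addnC (M %% P)) -divn_eq perM.
Qed.

Lemma cycle_lengthP M :
  0 < M -> is_eventual_period a M -> is_cycle_length a (cycle_length a).
Proof.
move=> M_gt0 perM; apply: epsilon_spec.
elim/ltn_ind: M M_gt0 perM => M IH M_gt0 perM.
have [[Q [/andP[Q_gt0 lt_QM] perQ]] | noQ] :=
  classic (exists Q, 0 < Q < M /\ is_eventual_period a Q).
  exact: IH lt_QM Q_gt0 perQ.
exists M; split=> //; split=> // Q Q_gt0 perQ; rewrite leqNgt.
by apply/negP=> lt_QM; apply: noQ; exists Q; rewrite Q_gt0 lt_QM.
Qed.

Lemma cycle_length_dvdn M :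
  0 < M -> is_eventual_period a M -> cycle_length a %| M.
Proof.
move=> M_gt0 perM; have [P_gt0 [perP minP]] := cycle_lengthP M_gt0 perM.
apply: contraT; rewrite /dvdn -lt0n => r_gt0.
by have := minP _ r_gt0 (eventual_period_mod perP perM); rewrite leqNgt ltn_pmod.
Qed.

End CycleLength.

Lemma Pmax_dvdn m n M : (forall a : vec m n, cycle_length a %| M) -> Pmax m n %| M.
Proof.
move=> dvd_M; have vec_ne : 0 < #|[pred a : vec m n | xpredT a]|.
  by apply/card_gt0P; exists [ffun=> 0%R].
by rewrite /Pmax; have [a _ ->] := eq_bigmax_cond (@cycle_length m n) vec_ne.
Qed.

Section RingIdentities.
Local Open Scope ring_scope.

Lemma expr1D_pchar_pow (R : nzRingType) p K (x : R) :
  p \in [pchar R] -> (1 + x) ^+ (p ^ K) = 1 + x ^+ (p ^ K).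
Proof.
move=> pcharRp; elim: K => [|K IH]; first by rewrite expn0 !expr1.
rewrite expnSr !exprM IH -!(pFrobenius_autE pcharRp).
by rewrite pFrobenius_autD_comm ?pFrobenius_aut1 //; apply/commr_sym/commr1.
Qed.

Lemma expr_twisted_period (R : pzSemiRingType) (A B : R) q :
  GRing.comm A B -> A ^+ q.+1 = B * A ->
  forall j k, A ^+ (k.+1 + j * q) = B ^+ j * A ^+ k.+1.
Proof.
move=> cAB expA.
have expS_q k : A ^+ (k.+1 + q) = B * A ^+ k.+1.
  by rewrite addSnnS exprD expA mulrA -(commrX k (commr_sym cAB)) -mulrA -exprSr.
elim=> [|j IH] k; first by rewrite mul0n addn0 expr0 mul1r.
have -> : (k.+1 + j.+1 * q = (k + j * q).+1 + q)%N by lia.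
by rewrite expS_q -addSn IH mulrA -exprS.
Qed.

End RingIdentities.

Section CyclicShift.
Variable n : nat.

Definition cyclic_shift : 'S_n := perm (@ordS_inj n).

Lemma cyclic_shiftX k (i : 'I_n) : val ((cyclic_shift ^+ k)%g i) = (i + k) %% n.
Proof.
rewrite permX; elim: k => [|k IH]; first by rewrite addn0 modn_small.
by rewrite iterS permE /= IH -addn1 modnDml -addnA addn1.
Qed.

Lemma cyclic_shift_order : (cyclic_shift ^+ n)%g = 1%g.
Proof.
by apply/permP => i; apply/val_inj; rewrite cyclic_shiftX perm1 modnDr modn_small.
Qed.

End CyclicShift.

Section ShiftMatrix.
Local Open Scope ring_scope.
Variables (R : nzRingType) (n' : nat).
Local Notation n := n'.+1.

Definition shift_mx : 'M[R]_n := perm_mx (cyclic_shift n).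

Definition Tmap_mx : 'M[R]_n := 1 + shift_mx.

Lemma shift_mx_order : shift_mx ^+ n = 1.
Proof.
suff perm_mxX k : perm_mx (cyclic_shift n ^+ k)%g = shift_mx ^+ k :> 'M[R]_n.
  by rewrite -perm_mxX cyclic_shift_order perm_mx1.
elim: k => [|k IH]; first by rewrite expg0 perm_mx1.
by rewrite expgSr perm_mxM IH exprSr.
Qed.

Lemma shift_mx_expr_mod k : shift_mx ^+ (k %% n) = shift_mx ^+ k.
Proof. exact: expr_mod shift_mx_order. Qed.

Variable p : nat.
Hypothesis pcharRp : p \in [pchar R].

Lemma Tmap_mx_expr_pchar_pow K : Tmap_mx ^+ (p ^ K) = 1 + shift_mx ^+ (p ^ K).
Proof.
apply: expr1D_pchar_pow; exact: (rmorph_pchar (@scalar_mx R n) pcharRp).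
Qed.

Let pK_subn1S K : ((p ^ K - 1).+1 = p ^ K)%N.
Proof. by rewrite subn1 prednK // expn_gt0 prime_gt0 // (pcharf_prime pcharRp). Qed.

Lemma Tmap_mx_period_mod1 K : (p ^ K = 1 %[mod n])%N ->
  forall k, Tmap_mx ^+ (k.+1 + (p ^ K - 1)) = Tmap_mx ^+ k.+1.
Proof.
move=> pK_mod k; have expA : Tmap_mx ^+ (p ^ K - 1).+1 = 1 * Tmap_mx.
  rewrite mul1r pK_subn1S Tmap_mx_expr_pchar_pow -shift_mx_expr_mod pK_mod.
  by rewrite shift_mx_expr_mod expr1.
by have := expr_twisted_period (commr1 _) expA 1 k; rewrite mul1n expr1n mul1r.
Qed.

Lemma Tmap_mx_period_modN1 K : (p ^ K + 1 = 0 %[mod n])%N ->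
  forall k, Tmap_mx ^+ (k.+1 + n * (p ^ K - 1)) = Tmap_mx ^+ k.+1.
Proof.
move=> pK_mod k; set B := shift_mx ^+ (p ^ K).
have B_shift : B * shift_mx = 1.
  by rewrite -exprSr -[(p ^ K).+1]addn1 -shift_mx_expr_mod pK_mod mod0n expr0.
have expA : Tmap_mx ^+ (p ^ K - 1).+1 = B * Tmap_mx.
  by rewrite pK_subn1S Tmap_mx_expr_pchar_pow mulrDr mulr1 B_shift addrC.
have cAB : GRing.comm Tmap_mx B.
  by apply: commrX; apply/commr_sym/commrD; [exact: commr1 | exact: commr_refl].
have B_order : B ^+ n = 1 by rewrite -exprM mulnC exprM shift_mx_order expr1n.
by rewrite (expr_twisted_period cAB expA) B_order mul1r.
Qed.

End ShiftMatrix.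

Section TmapMatrix.
Local Open Scope ring_scope.
Variables (m n' : nat).
Local Notation n := n'.+1.
Local Notation A := (Tmap_mx 'Z_m n').

Definition colvec (a : vec m n) : 'cV['Z_m]_n := \col_i a i.

Lemma colvec_inj : injective colvec.
Proof.
move=> a b eq_ab; apply/ffunP => i.
by have := congr1 (fun c : 'cV_n => c i ord0) eq_ab; rewrite !mxE.
Qed.

Lemma colvec_Tmap a : colvec (Tmap a) = A *m colvec a.
Proof.
by apply/colP => i; rewrite mulmxDl mul1mx -row_permE !mxE ffunE permE.
Qed.

Lemma colvec_iter k a : colvec (iter k (@Tmap m n) a) = A ^+ k *m colvec a.
Proof.
elim: k => [|k IH]; first by rewrite expr0 mul1mx.
by rewrite iterS colvec_Tmap IH exprS mulmxA.
Qed.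

Lemma Tmap_mx_eventual_period M :
  (forall k, A ^+ (k.+1 + M) = A ^+ k.+1) ->
  forall a : vec m n, is_eventual_period a M.
Proof.
move=> AM a; exists 1 => -[//|k] _.
by apply: colvec_inj; rewrite !colvec_iter AM.
Qed.

End TmapMatrix.

Theorem proposition2p5 (p n K : nat) (hp : prime p) (hn : (0 < n)%N) (hK : (0 < K)%N) :
  (p ^ K = 1 %[mod n] -> Pmax p n %| p ^ K - 1) /\
  (p ^ K + 1 = 0 %[mod n] -> Pmax p n %| n * (p ^ K - 1)).
Proof.
case: n hn => [//|n'] _.
have pchar_p : p \in [pchar 'Z_p]%R by rewrite inE hp /= pchar_Zp ?prime_gt1.
have period_gt0 : 0 < p ^ K - 1 by rewrite subn_gt0 -{1}(expn0 p) ltn_exp2l ?prime_gt1.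
split=> pK_mod; apply: Pmax_dvdn => a; apply: cycle_length_dvdn.
- exact: period_gt0.
- exact: Tmap_mx_eventual_period (Tmap_mx_period_mod1 pchar_p pK_mod) a.
- by rewrite muln_gt0.
- exact: Tmap_mx_eventual_period (Tmap_mx_period_modN1 pchar_p pK_mod) a.
Qed.
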